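(* Let $\mathcal N=(G,\beta,r)$ be a potential-based flow network with $G=(V,A)$, and let $s,t\in V$ be distinct. Suppose there exists a potential-based $(s,t)$-flow of value $d>0$ in $\mathcal N$ with potentials $\pi\in[0,\bar\pi]^V$, where $\bar\pi>0$. Then for every integer $k\ge1$ and all $k$ disjoint $(s,t)$-cuts $S_1\subseteq\dots\subseteq S_k\subseteq V$, $$\frac{1}{k\sqrt[r]{k}}\sum_{i=1}^k\sum_{a\in\delta(S_i)}\mu_a\geq\frac{d}{\sqrt[r]{\bar\pi}}.$$
   Context: A potential-based flow network $\mathcal N=(G,\beta,r)$ consists of a weakly connected directed multigraph $G=(V,A)$ without loops, resistances $\beta\in\mathbb{R}^A_{>0}$ and a degree $r>0$; the conductance of arc $a$ is $\mu_a=\beta_a^{-1/r}$. A potential-based $(s,t)$-flow of value $d$ is a pair $(\pi,f)\in\mathbb{R}^V\times\mathbb{R}^A$ with $\pi_u-\pi_v=\beta_a\,\mathrm{sign}(f_a)|f_a|^r$ for every arc $a=(u,v)$ and $\sum_{a\in\delta^+(v)}f_a-\sum_{a\in\delta^-(v)}f_a=b_v$ for all $v\in V$, where $b=d(\chi_s-\chi_t)$, $\chi_v$ the unit vector of $v$, and $\delta^+(v)$, $\delta^-(v)$ are the arcs leaving, resp. entering, $v$. For $S\subseteq V$, $\delta(S)$ is the set of arcs with one endpoint in $S$ and the other in $V\setminus S$ (either direction). An $(s,t)$-cut is a set $S\subseteq V$ with $s\in S$, $t\notin S$. Sets $S_1,\dots,S_k$ are $k$ disjoint $(s,t)$-cuts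 if each is an $(s,t)$-cut and $\delta(S_i)\cap\delta(S_j)=\emptyset$ for all $i\ne j$. *)

From HB Require Import structures.
From mathcomp Require Import all_boot all_order all_algebra.
From mathcomp Require Import all_classical all_reals all_analysis.
Set Implicit Arguments. Unset Strict Implicit. Unset Printing Implicit Defensive.
Import Order.TTheory GRing.Theory Num.Theory.
Local Open Scope ring_scope.

(* A directed multigraph G = (V, A): finite vertex and arc types, each arc a
   has tail [src a] and head [tgt a]. *)

Definition loopless (V A : finType) (src tgt : A -> V) : Prop :=
  forall a : A, src a != tgt a.

Definition und_adj (V A : finType) (src tgt : A -> V) : rel V :=
  fun u v => [exists a : A, ((src a == u) && (tgt a == v)) ||
                             ((src a == v) && (tgt a == u))].

Definition weakly_connected (V A : finType) (src tgt : A -> V) : Prop :=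
  forall u v : V, connect (und_adj src tgt) u v.

Definition conductance (R : realType) (A : finType) (beta : A -> R) (r : R)
  (a : A) : R := powR (beta a) (- r^-1).

Definition delta_out (V A : finType) (src : A -> V) (v : V) : {set A} :=
  [set a | src a == v].
Definition delta_in (V A : finType) (tgt : A -> V) (v : V) : {set A} :=
  [set a | tgt a == v].

Definition delta_cut (V A : finType) (src tgt : A -> V) (S : {set V}) : {set A} :=
  [set a | (src a \in S) != (tgt a \in S)].

Definition is_pb_st_flow (R : realType) (V A : finType) (src tgt : A -> V)
  (beta : A -> R) (r : R) (s t : V) (d : R) (pi : V -> R) (f : A -> R) : Prop :=
  (forall a : A, pi (src a) - pi (tgt a) = beta a * Num.sg (f a) * powR `|f a| r)
  /\ (forall v : V,
        \sum_(a in delta_out src v) f a - \sum_(a in delta_in tgt v) f a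
        = d * ((v == s)%:R - (v == t)%:R)).

Definition is_st_cut (V : finType) (s t : V) (S : {set V}) : Prop :=
  s \in S /\ t \notin S.

Definition disjoint_st_cuts (V A : finType) (src tgt : A -> V) (s t : V) (k : nat)
  (S : 'I_k -> {set V}) : Prop :=
  (forall i, is_st_cut s t (S i)) /\
  (forall i j, i != j -> [disjoint delta_cut src tgt (S i) & delta_cut src tgt (S j)]).

(* Integrating the flow against a vertex function g gives
   sum_a f_a (g(src a) - g(tgt a)) = d (g s - g t).  With g the indicator of a cut this
   says that every (s,t)-cut carries at least d units of flow; with g = pi it says that
   the energy sum_a beta_a |f_a|^(r+1) equals d (pi s - pi t) <= d pibar.  Young's
   inequality with exponents r+1 and (r+1)/r bounds |f_a| by a combination of its
   energy and its conductance mu_a, at a free scale q.  Summing over k cuts with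
   disjoint arc sets gives k d <= k d/(r+1) + r/(r+1) q^(1/r) sum mu, and the choice
   q = pibar / k yields the claim. *)
From HB Require Import structures.
From mathcomp Require Import all_boot all_order all_algebra.
From mathcomp Require Import all_classical all_reals all_analysis.
From mathcomp Require Import ring lra.
Set Implicit Arguments. Unset Strict Implicit. Unset Printing Implicit Defensive.
Import Order.TTheory GRing.Theory Num.Theory.
Local Open Scope ring_scope.

Lemma powRV (R : realType) (x p : R) : 0 <= x -> powR x^-1 p = (powR x p)^-1.
Proof.
rewrite le_eqVlt => /predU1P[<- | x_gt0]; last first.
  by rewrite -(powR_inv1 (ltW x_gt0)) -powRrM mulN1r powRN.
rewrite invr0; have [-> | p_neq0] := eqVneq p 0; first by rewrite powRr0 invr1.
by rewrite powR0 // invr0.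
Qed.

Lemma young_powR (R : realType) (r q u : R) : 0 < r -> 0 < q -> 0 <= u ->
  u <= (r + 1)^-1 * (u * powR u r / q) + (1 - (r + 1)^-1) * powR q r^-1.
Proof.
move=> r_gt0 q_gt0 u_ge0.
have r1_gt0 : 0 < r + 1 by rewrite addr_gt0.
have conj_gt0 : 0 < (r + 1) / r by rewrite divr_gt0.
have conj_exp : (r + 1)^-1 + ((r + 1) / r)^-1 = 1.
  by rewrite invf_div; field; rewrite gt_eqF.
have pow_u : powR u (r + 1) = u * powR u r by rewrite -mulr_powRB1 ?addrK.
have pow_q : powR q ((r + 1) / r) = q * powR q r^-1.
  rewrite -mulr_powRB1 ?(ltW q_gt0) //; congr (_ * powR q _).
  by field; rewrite gt_eqF.
have := conjugate_powR u_ge0 (ltW q_gt0) r1_gt0 conj_gt0 conj_exp.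
rewrite pow_u pow_q => young; rewrite -(ler_pM2r q_gt0); apply: (le_trans young).
by rewrite le_eqVlt; apply/predU1P; left; field; rewrite !gt_eqF.
Qed.

(* Young's inequality for [y * b^(1/r)], rescaled by [b^(-1/r)]. *)
Lemma young_powR_weighted (R : realType) (r q b y : R) :
  0 < r -> 0 < q -> 0 < b -> 0 <= y ->
  y <= (r + 1)^-1 / q * (b * y * powR y r)
       + (1 - (r + 1)^-1) * powR q r^-1 * powR b (- r^-1).
Proof.
move=> r_gt0 q_gt0 b_gt0 y_ge0.
set m := powR b (- r^-1).
have m_gt0 : 0 < m by rewrite powR_gt0.
have scale_b : powR b r^-1 * m = 1 by rewrite /m powRN mulfV // gt_eqF // powR_gt0.
have u_ge0 : 0 <= y * powR b r^-1 by rewrite mulr_ge0 // powR_ge0.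
have young := ler_wpM2r (ltW m_gt0) (young_powR r_gt0 q_gt0 u_ge0).
rewrite -{1}[y]mulr1 -{1}scale_b mulrA; apply: (le_trans young).
have pow_u : powR (y * powR b r^-1) r = powR y r * b.
  by rewrite powRM ?powR_ge0 // -powRrM mulVf ?gt_eqF // powRr1 // ltW.
rewrite pow_u le_eqVlt; apply/predU1P; left; apply/eqP; rewrite -subr_eq0; apply/eqP.
transitivity ((r + 1)^-1 * (y * powR y r * b / q) * (powR b r^-1 * m - 1)).
  by field; rewrite !gt_eqF // addr_gt0.
by rewrite scale_b subrr mulr0.
Qed.

Lemma ler_absorb (R : realFieldType) (x y t : R) :
  t < 1 -> x <= t * x + (1 - t) * y -> x <= y.
Proof. by move=> t_lt1 x_le; nra. Qed.

Lemma sum_disjoint_le_sum (I T : finType) (R : numDomainType) (D : I -> {set T})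
    (F : T -> R) :
  (forall x, 0 <= F x) -> (forall i j, i != j -> [disjoint D i & D j]) ->
  \sum_i \sum_(x in D i) F x <= \sum_x F x.
Proof.
move=> F_ge0 disjointD; rewrite -partition_disjoint_bigcup //.
by rewrite [leRHS](bigID (mem (\bigcup_i D i))) /= lerDl sumr_ge0.
Qed.

Section FlowConservation.
Variables (R : comPzRingType) (V A : finType) (src tgt : A -> V).

Definition flow_conservation (s t : V) (d : R) (f : A -> R) : Prop :=
  forall v : V, \sum_(a in delta_out src v) f a - \sum_(a in delta_in tgt v) f a
                = d * ((v == s)%:R - (v == t)%:R).

Lemma sum_mul_eq_indicator (F : V -> R) (x : V) :
  \sum_v F v * (v == x)%:R = F x.
Proof.
by rewrite (bigD1 x) //= eqxx mulr1 big1 ?addr0 // => v /negbTE ->; rewrite mulr0.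
Qed.

Lemma sum_mul_sum_by_endpoint (e : A -> V) (g : V -> R) (h : A -> R) :
  \sum_v g v * \sum_(a in [set a | e a == v]) h a = \sum_a g (e a) * h a.
Proof.
rewrite (partition_big e predT) //=; apply: eq_bigr => v _.
rewrite mulr_sumr; apply: eq_big => [a | a]; first by rewrite inE.
by rewrite inE => /eqP ->.
Qed.

Lemma flow_sum_gradient (s t : V) (d : R) (f : A -> R) (g : V -> R) :
  flow_conservation s t d f ->
  \sum_a f a * (g (src a) - g (tgt a)) = d * (g s - g t).
Proof.
move=> conservation.
have netflow : \sum_v g v * (\sum_(a in delta_out src v) f a
                             - \sum_(a in delta_in tgt v) f a)
               = \sum_a f a * (g (src a) - g (tgt a)).
  under eq_bigr do rewrite mulrBr.
  rewrite sumrB /delta_out /delta_in !sum_mul_sum_by_endpoint -sumrB.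
  by apply: eq_bigr => a _; rewrite mulrBr ![f a * _]mulrC.
rewrite -netflow.
under eq_bigr do rewrite conservation mulrCA mulrBr.
by rewrite -mulr_sumr sumrB !sum_mul_eq_indicator.
Qed.

End FlowConservation.

Lemma st_flow_le_cut (R : realDomainType) (V A : finType) (src tgt : A -> V)
    (s t : V) (d : R) (f : A -> R) (S : {set V}) :
  flow_conservation src tgt s t d f -> s \in S -> t \notin S ->
  d <= \sum_(a in delta_cut src tgt S) `|f a|.
Proof.
move=> conservation sS tS.
have := flow_sum_gradient (fun v => (v \in S)%:R) conservation.
rewrite sS (negbTE tS) subr0 mulr1 => <-.
rewrite [leRHS]big_mkcond; apply: ler_sum => a _; rewrite inE.
case: (src a \in S); case: (tgt a \in S);
  rewrite /= ?subrr ?subr0 ?sub0r ?mulr0 ?mulr1 ?mulrN1 //.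
- exact: ler_norm.
- by rewrite -normrN ler_norm.
Qed.

Section PotentialBasedFlow.
Variables (R : realType) (V A : finType) (src tgt : A -> V).
Variables (beta : A -> R) (r : R) (s t : V) (d : R) (pi : V -> R) (f : A -> R).
Hypotheses (beta_gt0 : forall a, 0 < beta a) (r_gt0 : 0 < r).
Hypothesis flow : is_pb_st_flow src tgt beta r s t d pi f.

Definition arc_energy (a : A) : R := beta a * `|f a| * powR `|f a| r.

Lemma arc_energy_ge0 (a : A) : 0 <= arc_energy a.
Proof. by rewrite mulr_ge0 ?powR_ge0 // mulr_ge0 // ltW. Qed.

Lemma sum_arc_energy : \sum_a arc_energy a = d * (pi s - pi t).
Proof.
have [potential conservation] := flow.
rewrite -(flow_sum_gradient pi conservation); apply: eq_bigr => a _.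
by rewrite /arc_energy potential normrEsg; ring.
Qed.

Lemma sum_disjoint_cuts_energy_le (pibar : R) (k : nat) (S : 'I_k -> {set V}) :
  0 <= d -> (forall v, 0 <= pi v <= pibar) ->
  (forall i j, i != j ->
     [disjoint delta_cut src tgt (S i) & delta_cut src tgt (S j)]) ->
  \sum_i \sum_(a in delta_cut src tgt (S i)) arc_energy a <= d * pibar.
Proof.
move=> d_ge0 pi_bounds disjoint_cuts.
apply: le_trans (sum_disjoint_le_sum arc_energy_ge0 disjoint_cuts) _.
rewrite sum_arc_energy; apply: ler_wpM2l => //.
by have /andP[? ?] := pi_bounds s; have /andP[? ?] := pi_bounds t; lra.
Qed.

Lemma st_cut_energy_conductance_bound (q : R) (S : {set V}) :
  0 < q -> s \in S -> t \notin S ->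
  d <= (r + 1)^-1 / q * \sum_(a in delta_cut src tgt S) arc_energy a
       + (1 - (r + 1)^-1) * powR q r^-1
         * \sum_(a in delta_cut src tgt S) conductance beta r a.
Proof.
move=> q_gt0 sS tS; apply: le_trans (st_flow_le_cut flow.2 sS tS) _.
rewrite !mulr_sumr -big_split; apply: ler_sum => a _.
exact: young_powR_weighted.
Qed.

End PotentialBasedFlow.

Theorem theorem3 (R : realType) (V A : finType) (src tgt : A -> V)
  (beta : A -> R) (r : R) (s t : V) (d pibar : R) :
  weakly_connected src tgt -> loopless src tgt ->
  (forall a, 0 < beta a) -> 0 < r ->
  s != t -> 0 < d -> 0 < pibar ->
  (exists (pi : V -> R) (f : A -> R),
      is_pb_st_flow src tgt beta r s t d pi f /\
      (forall v, 0 <= pi v <= pibar)) ->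
  forall (k : nat) (S : 'I_k -> {set V}),
    (1 <= k)%N ->
    disjoint_st_cuts src tgt s t S ->
    (forall i j : 'I_k, (i <= j)%N -> S i \subset S j) ->
    d / powR pibar r^-1 <=
      (k%:R * powR k%:R r^-1)^-1 *
        \sum_(i < k) \sum_(a in delta_cut src tgt (S i)) conductance beta r a.
Proof.
move=> _ _ beta_gt0 r_gt0 _ d_gt0 pibar_gt0 [pi [f [flow pi_bounds]]] k S k_ge1
  [cuts disjoint_cuts] _.
have k_gt0 : 0 < k%:R :> R by rewrite ltr0n.
set q := pibar / k%:R; have q_gt0 : 0 < q by rewrite divr_gt0.
set M := \sum_(i < k) \sum_(a in delta_cut src tgt (S i)) conductance beta r a.
have kd_le : k%:R * d <= (r + 1)^-1 * (k%:R * d)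
                         + (1 - (r + 1)^-1) * (powR q r^-1 * M).
  rewrite [leLHS](_ : _ = \sum_(i < k) d); last by rewrite sumr_const card_ord mulr_natl.
  apply: le_trans (ler_sum _ (fun i _ => st_cut_energy_conductance_bound
                     beta_gt0 r_gt0 flow q_gt0 (cuts i).1 (cuts i).2)) _.
  rewrite big_split /= -!mulr_sumr [X in _ <= _ + X]mulrA lerD2r -mulrA.
  apply: ler_wpM2l; first by rewrite invr_ge0 addr_ge0 ?ltW.
  rewrite ler_pdivrMl // (_ : q * _ = d * pibar); last by rewrite /q; field; rewrite gt_eqF.
  by apply: (sum_disjoint_cuts_energy_le beta_gt0 flow) => //; exact: ltW.
have := ler_absorb _ kd_le; rewrite invf_lt1 ?ltrDr ?addr_gt0 // => /(_ r_gt0).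
rewrite /q powRM ?powRV ?invr_ge0 ?(ltW pibar_gt0) ?(ltW k_gt0) //.
set P := powR pibar r^-1; set K := powR k%:R r^-1 => kd_le_PKM.
have [P_gt0 K_gt0] : 0 < P /\ 0 < K by rewrite !powR_gt0.
rewrite ler_pdivrMr // -(ler_pM2l k_gt0); apply: (le_trans kd_le_PKM).
by rewrite le_eqVlt; apply/predU1P; left; field; rewrite !gt_eqF.
Qed.
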